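(* Let $\mathfrak{t},\mathfrak{w}$ be sesquilinear forms on $\mathbb{C}^n$ with $\mathfrak{w}\geq 0$. (i) The following statements are equivalent: (a) $\mathfrak{t}$ is $\mathfrak{w}$-left bounded; (b) $\mathfrak{t}$ is $\mathfrak{w}$-left regular; (c) $\ker(\mathfrak{w})\subseteq \ker(\mathfrak{t})$. (ii) $\mathfrak{t}$ is $\mathfrak{w}$-left strongly singular if and only if $\ker(\mathfrak{w})+\ker(\mathfrak{t})=\mathbb{C}^n$.
   Context: A sesquilinear form $\mathfrak{t}$ on a complex vector space $\mathcal{D}$ is linear in the first and anti-linear in the second component; $\mathfrak{t}[f]:=\mathfrak{t}(f,f)$, and $\mathfrak{t}\geq 0$ means $\mathfrak{t}[f]\geq 0$ for all $f$. $\ker(\mathfrak{t}):=\{f\in\mathcal{D}:\mathfrak{t}(f,g)=0\ \forall g\in\mathcal{D}\}$. For a non-negative form $\mathfrak{w}$, a non-negative form $\mathfrak{u}$ is $\mathfrak{w}$-absolutely continuous ($\mathfrak{u}\ll\mathfrak{w}$) if $\mathfrak{w}[f_n]\to 0$ and $\mathfrak{u}[f_n-f_m]\to 0$ imply $\mathfrak{u}[f_n]\to 0$; it is $\mathfrak{w}$-singular ($\mathfrak{u}\perp\mathfrak{w}$) if for every $f\in\mathcal{D}$ there is a sequence $\{f_n\}\subset\mathcal{D}$ with $\mathfrak{w}[f_n]\to 0$ and $\mathfrak{u}[f-f_n]\to 0$. $M_l(\mathfrak{t})$ denotes the set of non-negative forms $\mathfrak{s}_1$ on $\mathcal{D}$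 for which there is a non-negative form $\mathfrak{s}_2$ on $\mathcal{D}$ with $|\mathfrak{t}(f,g)|\leq \mathfrak{s}_1[f]^{1/2}\mathfrak{s}_2[g]^{1/2}$ for all $f,g\in\mathcal{D}$. $\mathfrak{t}$ is called $\mathfrak{w}$-left regular if some $\mathfrak{s}_1\in M_l(\mathfrak{t})$ satisfies $\mathfrak{s}_1\ll\mathfrak{w}$; $\mathfrak{w}$-left strongly singular if some $\mathfrak{s}_1\in M_l(\mathfrak{t})$ satisfies $\mathfrak{s}_1\perp\mathfrak{w}$; $\mathfrak{w}$-left bounded if $C\mathfrak{w}\in M_l(\mathfrak{t})$ for some $C>0$. Here $\mathcal{D}=\mathbb{C}^n$. *)

(* C^n = 'cV[R[i]]_n with R : realType (R[i] = complex numbers over the reals). *)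
From mathcomp Require Import all_boot all_algebra.
From mathcomp Require Import reals complex.
Set Implicit Arguments. Unset Strict Implicit. Unset Printing Implicit Defensive.
Import GRing.Theory Num.Theory.
Local Open Scope ring_scope.
Local Open Scope complex_scope.

Section Forms.
Variables (R : realType) (n : nat).

Definition svec := 'cV[R[i]]_n.
Definition sform := svec -> svec -> R[i].

Definition sesquilinear (t : sform) : Prop :=
  (forall (a : R[i]) (x y z : svec), t (a *: x + y) z = a * t x z + t y z) /\
  (forall (a : R[i]) (x y z : svec), t x (a *: y + z) = a^* * t x y + t x z).

(* t >= 0 : t[f] >= 0 for all f (in R[i], 0 <= z means z is a nonnegative real) *)
Definition nonneg_form (t : sform) : Prop := forall f : svec, 0 <= t f f.

Definition in_ker (t : sform) (f : svec) : Prop := forall g : svec, t f g = 0.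

Definition cvg0 (u : nat -> R[i]) : Prop :=
  forall e : R, 0 < e -> exists N : nat, forall k : nat, (N <= k)%N -> `|u k| < e%:C.

Definition form_cauchy (u : sform) (f : nat -> svec) : Prop :=
  forall e : R, 0 < e -> exists N : nat, forall k l : nat, (N <= k)%N -> (N <= l)%N ->
    `|u (f k - f l) (f k - f l)| < e%:C.

Definition abs_cont (u w : sform) : Prop :=
  forall f : nat -> svec,
    cvg0 (fun k => w (f k) (f k)) -> form_cauchy u f -> cvg0 (fun k => u (f k) (f k)).

Definition singular (u w : sform) : Prop :=
  forall f : svec, exists fs : nat -> svec,
    cvg0 (fun k => w (fs k) (fs k)) /\ cvg0 (fun k => u (f - fs k) (f - fs k)).

Definition in_Ml (t s1 : sform) : Prop :=
  sesquilinear s1 /\ nonneg_form s1 /\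
  exists s2 : sform, sesquilinear s2 /\ nonneg_form s2 /\
    forall f g : svec, `|t f g| <= sqrtC (s1 f f) * sqrtC (s2 g g).

Definition left_regular (t w : sform) : Prop :=
  exists s1 : sform, in_Ml t s1 /\ abs_cont s1 w.

Definition left_strongly_singular (t w : sform) : Prop :=
  exists s1 : sform, in_Ml t s1 /\ singular s1 w.

Definition left_bounded (t w : sform) : Prop :=
  exists c : R, 0 < c /\ in_Ml t (fun f g => c%:C * w f g).

End Forms.

(** In finite dimension a sesquilinear form is [t f g = <T f, g>] for its
    matrix [T], and [ker t = ker T].  If [ker w] is contained in [ker t], then
    [T] factors through the matrix of [w], so [t f g = w f (Y g)] and
    Cauchy-Schwarz for [w] puts [w] itself in [M_l(t)].  Conversely an [s1]
    in [M_l(t)] with [s1 << w] vanishes on [ker w] (test constant sequences),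
    and [ker s1] is contained in [ker t].
    For (ii), let [s1] in [M_l(t)] be [w]-singular.  A linear functional
    vanishing on [ker w] and on [ker s1] is both [w (.) y] and [s1 (.) z];
    splitting [h = f_k + (h - f_k)] with [w[f_k] -> 0] and [s1[h - f_k] -> 0],
    Cauchy-Schwarz shows that it vanishes at [h].  By duality
    [ker w + ker s1] is everything.  Conversely, if [ker w + ker t] is
    everything, then [<T f, T g>] lies in [M_l(t)] and is [w]-singular. *)

From mathcomp Require Import all_boot all_order all_algebra.
From mathcomp Require Import reals complex.
From mathcomp Require Import ring.
Set Implicit Arguments. Unset Strict Implicit. Unset Printing Implicit Defensive.
Import Order.TTheory GRing.Theory Num.Theory.
Local Open Scope ring_scope.

Lemma col_sum_delta (T : pzSemiRingType) m (u : 'cV[T]_m) :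
  u = \sum_j u j 0 *: delta_mx j 0.
Proof.
by rewrite {1}[u]matrix_sum_delta; apply: eq_bigr => j _; rewrite big_ord1.
Qed.

Lemma mulmx_factor_ker (F : fieldType) m p q (A : 'M[F]_(m, q)) (M : 'M[F]_(p, q)) :
  (forall v : 'cV_q, M *m v = 0 -> A *m v = 0) -> exists X, A = X *m M.
Proof.
move=> kerMA; apply/submxP; rewrite submxE -trmx_eq0 trmx_mul.
apply/eqP/row_matrixP => j; rewrite row_mul row0 -tr_col -trmx_mul kerMA ?trmx0 //.
by rewrite colE mulmxA mulmx_coker mul0mx.
Qed.

Section SesquilinearForms.
Variables (R : realType) (n : nat).
Local Notation C := R[i].
Local Notation V := (svec R n).
Implicit Types (s t w : sform R n) (f g h : V).

Section Linearity.
Variable s : sform R n.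
Hypothesis s_sesq : sesquilinear s.

Lemma sesqDl x y z : s (x + y) z = s x z + s y z.
Proof. by have := s_sesq.1 1 x y z; rewrite scale1r mul1r. Qed.

Lemma sesqBl x y z : s (x - y) z = s x z - s y z.
Proof. by have := s_sesq.1 (-1) y x z; rewrite scaleN1r mulN1r addrC => ->; apply: addrC. Qed.

Lemma sesq0l z : s 0 z = 0.
Proof. by have := sesqBl 0 0 z; rewrite !subrr. Qed.

Lemma sesqZl a x z : s (a *: x) z = a * s x z.
Proof. by have := s_sesq.1 a x 0 z; rewrite addr0 sesq0l addr0. Qed.

Lemma sesq_suml (I : finType) (F : I -> V) z : s (\sum_i F i) z = \sum_i s (F i) z.
Proof. exact: (big_morph (s^~ z) (fun x y => sesqDl x y z) (sesq0l z)). Qed.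

Lemma sesqDr x y z : s z (x + y) = s z x + s z y.
Proof. by have := s_sesq.2 1 z x y; rewrite scale1r rmorph1 mul1r. Qed.

Lemma sesqBr x y z : s z (x - y) = s z x - s z y.
Proof.
by have := s_sesq.2 (-1) z y x; rewrite scaleN1r rmorphN1 mulN1r addrC => ->; apply: addrC.
Qed.

Lemma sesq0r z : s z 0 = 0.
Proof. by have := sesqBr 0 0 z; rewrite !subrr. Qed.

Lemma sesqZr a x z : s z (a *: x) = a^* * s z x.
Proof. by have := s_sesq.2 a z x 0; rewrite addr0 sesq0r addr0. Qed.

Lemma sesq_sumr (I : finType) (F : I -> V) z : s z (\sum_i F i) = \sum_i s z (F i).
Proof. exact: (big_morph (s z) (fun x y => sesqDr x y z) (sesq0r z)). Qed.

End Linearity.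

Section NonnegativeForm.
Variable s : sform R n.
Hypotheses (s_sesq : sesquilinear s) (s_ge0 : nonneg_form s).

Lemma sesq_diag_conj f : (s f f)^* = s f f.
Proof. exact/conj_Creal/ger0_real/s_ge0. Qed.

Lemma sesq_conj f g : s g f = (s f g)^*.
Proof.
set d := s g f - (s f g)^*.
have key l : l * d = l^* * d^*.
  apply/eqP; rewrite -subr_eq0; apply/eqP.
  transitivity (s (f + l *: g) (f + l *: g) - (s (f + l *: g) (f + l *: g))^*).
    rewrite /d !sesqDl // !sesqDr // !sesqZl // !sesqZr //.
    by rewrite !rmorphD !rmorphM !rmorphN /= !conjCK !sesq_diag_conj; ring.
  by rewrite sesq_diag_conj subrr.
have d_real : d^* = d by rewrite -[RHS]mul1r key conjC1 mul1r.
have /eqP : 'i * d = - ('i * d) by rewrite [LHS]key conjCi d_real mulNr.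
rewrite -addr_eq0 -mulr2n mulrn_eq0 /= mulf_eq0 (negPf (neq0Ci _)) /= subr_eq0.
by move/eqP.
Qed.

Lemma sesq_CauchySchwarz f g : `|s f g| ^+ 2 <= s f f * s g g.
Proof.
rewrite normCK; set a := s f g.
have expand l : s (f - l *: g) (f - l *: g)
    = s f f - l^* * a - l * a^* + l * l^* * s g g.
  by rewrite /a !sesqBl // !sesqBr // !sesqZl // !sesqZr // (sesq_conj f g); ring.
have := s_ge0 g; rewrite le_eqVlt => /orP[/eqP gg0 | gg_gt0].
  rewrite -gg0 mulr0; have [-> | a_neq0] := eqVneq a 0; first by rewrite mul0r.
  (* moving far enough along [g] would make [s] negative *)
  have := s_ge0 (f - ((s f f + 1) / (2 * a^*)) *: g).
  rewrite expand -gg0 mulr0 addr0 !rmorphM /= fmorphV /= rmorphM /= rmorphD /=.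
  rewrite sesq_diag_conj rmorph1 rmorph_nat conjCK.
  have -> : s f f - (s f f + 1) / (2 * a) * a - (s f f + 1) / (2 * a^*) * a^* = -1.
    by field; rewrite conjC_eq0 a_neq0.
  by rewrite ler0N1.
have := s_ge0 (f - (a / s g g) *: g).
rewrite expand !rmorphM /= fmorphV /= sesq_diag_conj.
have gg_neq0 : s g g != 0 by rewrite gt_eqF.
have -> : s f f - a^* / s g g * a - a / s g g * a^* + a / s g g * (a^* / s g g) * s g g
    = s f f - a * a^* / s g g by field.
by rewrite subr_ge0 ler_pdivrMr.
Qed.

Lemma sesq_CauchySchwarz_sqrt f g : `|s f g| <= sqrtC (s f f) * sqrtC (s g g).
Proof.
rewrite -sqrtCM ?nnegrE // -(sqrCK (normr_ge0 (s f g))).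
by rewrite ler_sqrtC ?nnegrE ?sesq_CauchySchwarz ?exprn_ge0 ?mulr_ge0.
Qed.

End NonnegativeForm.

Definition sform_mx s : 'M[C]_n := \matrix_(j, i) s (delta_mx i 0) (delta_mx j 0).

Section MatrixOfForm.
Variable s : sform R n.
Hypothesis s_sesq : sesquilinear s.

Lemma sesq_expandr f g : s f g = \sum_j (g j 0)^* * s f (delta_mx j 0).
Proof.
by rewrite {1}[g]col_sum_delta sesq_sumr //; apply: eq_bigr => j _; rewrite sesqZr.
Qed.

Lemma mul_sform_mx f j : (sform_mx s *m f) j 0 = s f (delta_mx j 0).
Proof.
rewrite mxE {2}[f]col_sum_delta sesq_suml //; apply: eq_bigr => i _.
by rewrite sesqZl // mxE mulrC.
Qed.

Lemma in_kerE f : in_ker s f <-> sform_mx s *m f = 0.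
Proof.
split=> [kerf | Mf0 g]; first by apply/colP => j; rewrite mul_sform_mx kerf mxE.
by rewrite sesq_expandr big1 // => j _; rewrite -mul_sform_mx Mf0 mxE mulr0.
Qed.

Lemma sesq_represent m (A : 'M[C]_(m, n)) :
  (forall f, in_ker s f -> A *m f = 0) ->
  exists Y : 'M_(n, m), forall f i, (A *m f) i 0 = s f (col i Y).
Proof.
move=> kerA; have [X ->] : exists X, A = X *m sform_mx s.
  by apply: mulmx_factor_ker => f /in_kerE /kerA.
exists (map_mx Num.conj X^T) => f i.
rewrite -mulmxA mxE sesq_expandr; apply: eq_bigr => j _.
by rewrite mul_sform_mx !mxE conjCK.
Qed.

End MatrixOfForm.

Lemma sesq_factor s t : sesquilinear s -> sesquilinear t ->
  (forall f, in_ker s f -> in_ker t f) ->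
  exists Y : 'M[C]_n, forall f g, t f g = s f (Y *m g).
Proof.
move=> s_sesq t_sesq kerst.
have [Y tY] := sesq_represent s_sesq (fun f kf => (in_kerE t_sesq f).1 (kerst f kf)).
exists Y => f g; rewrite sesq_expandr // {2}[g]col_sum_delta mulmx_sumr sesq_sumr //.
by apply: eq_bigr => j _; rewrite -scalemxAr -colE sesqZr // -tY mul_sform_mx.
Qed.

Section NullSequences.
Implicit Types u v : nat -> C.

Lemma cvg0P u :
  cvg0 u <-> forall e : C, 0 < e -> exists N, forall k, (N <= k)%N -> `|u k| < e.
Proof.
split=> [u0 e e_gt0 | u0 e e_gt0]; last by apply: u0; rewrite ltcR.
have [r e_r] := complex_realP _ (gtr0_real e_gt0).
by rewrite e_r; apply: u0; rewrite -ltcR -e_r.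
Qed.

Lemma cvg0_zero : cvg0 (fun _ => 0 : C).
Proof. by apply/cvg0P => e e_gt0; exists 0%N => k _; rewrite normr0. Qed.

Lemma cvg0_const_eq0 u z : (forall k, u k = z) -> cvg0 u -> z = 0.
Proof.
move=> uz /cvg0P u0; apply/eqP; apply: contraT => z_neq0.
have [N /(_ N (leqnn N))] : exists N, forall k, (N <= k)%N -> `|u k| < `|z|.
  by apply: u0; rewrite normr_gt0.
by rewrite uz ltxx.
Qed.

Lemma cvg0D u v : cvg0 u -> cvg0 v -> cvg0 (fun k => u k + v k).
Proof.
move=> /cvg0P u0 /cvg0P v0; apply/cvg0P => e e_gt0.
have e2_gt0 : 0 < e / 2 by rewrite divr_gt0.
have [[Nu uN] [Nv vN]] := (u0 _ e2_gt0, v0 _ e2_gt0).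
exists (maxn Nu Nv) => k; rewrite geq_max => /andP[/uN uk /vN vk].
by rewrite (splitr e); apply: le_lt_trans (ler_normD _ _) (ltrD uk vk).
Qed.

Lemma cvg0M a u : cvg0 u -> cvg0 (fun k => a * u k).
Proof.
move=> /cvg0P u0; apply/cvg0P => e e_gt0.
have a1_gt0 : 0 < `|a| + 1 by rewrite ltr_wpDl.
have [N uN] := u0 _ (divr_gt0 e_gt0 a1_gt0).
exists N => k /uN uk; rewrite normrM.
apply: le_lt_trans (_ : `|a| * `|u k| <= (`|a| + 1) * `|u k|) _.
  by rewrite ler_wpM2r // lerDl.
by rewrite mulrC -ltr_pdivlMr.
Qed.

End NullSequences.

Lemma cvg0_sesq_l s (fs : nat -> V) y : sesquilinear s -> nonneg_form s ->
  cvg0 (fun k => s (fs k) (fs k)) -> cvg0 (fun k => s (fs k) y).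
Proof.
move=> s_sesq s_ge0 /cvg0P fs0; apply/cvg0P => e e_gt0.
have yy_ge0 := s_ge0 y; set W := s y y in yy_ge0 *.
have W1_gt0 : 0 < W + 1 by rewrite ltr_wpDl.
have [N fsN] := fs0 _ (divr_gt0 (exprn_gt0 2 e_gt0) W1_gt0).
exists N => k /fsN fsk.
rewrite -(ltr_pXn2r (_ : 0 < 2)%N) ?nnegrE ?(ltW e_gt0) //.
apply: le_lt_trans (sesq_CauchySchwarz s_sesq s_ge0 _ _) _.
apply: le_lt_trans (_ : _ <= e ^+ 2 / (W + 1) * W) _.
  by rewrite ler_wpM2r // -(ger0_norm (s_ge0 (fs k))) ltW.
by rewrite mulrAC ltr_pdivrMr // ltr_pM2l ?exprn_gt0 // ltrDl.
Qed.

Section Constructions.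
Variable s : sform R n.
Hypothesis s_sesq : sesquilinear s.

Lemma sesq_scale k : sesquilinear (fun f g => k * s f g).
Proof. by split=> a x y z; rewrite (s_sesq.1, s_sesq.2) mulrDr mulrCA. Qed.

Lemma sesq_comp (P : 'M[C]_n) : sesquilinear (fun f g => s (P *m f) (P *m g)).
Proof. by split=> a x y z; rewrite mulmxDr -scalemxAr (s_sesq.1, s_sesq.2). Qed.

End Constructions.

Definition std_inner : sform R n := fun f g => \sum_j f j 0 * (g j 0)^*.

Lemma std_inner_sesq : sesquilinear std_inner.
Proof.
split=> a x y z; rewrite /std_inner mulr_sumr -big_split; apply: eq_bigr => j _;
  rewrite !mxE /= ?rmorphD ?rmorphM /=; ring.
Qed.

Lemma std_inner_ge0 : nonneg_form std_inner.
Proof. by move=> f; apply: sumr_ge0 => j _; apply: mul_conjC_ge0. Qed.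

Lemma sform_std_inner s f g : sesquilinear s -> s f g = std_inner (sform_mx s *m f) g.
Proof.
move=> s_sesq; rewrite sesq_expandr //; apply: eq_bigr => j _.
by rewrite mul_sform_mx // mulrC.
Qed.

Lemma in_Ml_ker t s1 f : in_Ml t s1 -> s1 f f = 0 -> in_ker t f.
Proof.
move=> [_ [_ [s2 [_ [_ t_le]]]]] ff0 g; apply/eqP; rewrite -normr_le0.
by have := t_le f g; rewrite ff0 sqrtC0 mul0r.
Qed.

Lemma left_bounded_regular t w : left_bounded t w -> left_regular t w.
Proof. by move=> [c [_ Ml]]; eexists; split; [exact: Ml | move=> fs /cvg0M]. Qed.

Lemma left_regular_ker t w : sesquilinear w -> left_regular t w ->
  forall f, in_ker w f -> in_ker t f.
Proof.
move=> w_sesq [s1 [Ml s1_ac]] f wf; apply: (in_Ml_ker Ml).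
have s1_sesq : sesquilinear s1 := Ml.1.
apply: (@cvg0_const_eq0 (fun _ => s1 f f)) => //; apply: (s1_ac (fun _ => f)).
  by rewrite /= wf; exact: cvg0_zero.
by move=> e e_gt0; exists 0%N => k l _ _; rewrite subrr sesq0l // normr0 ltcR.
Qed.

Lemma ker_left_bounded t w : sesquilinear t -> sesquilinear w -> nonneg_form w ->
  (forall f, in_ker w f -> in_ker t f) -> left_bounded t w.
Proof.
move=> t_sesq w_sesq w_ge0 kerwt; have [Y tY] := sesq_factor w_sesq t_sesq kerwt.
exists 1; split; first exact: ltr01.
split; first exact: sesq_scale.
split; first by move=> f; rewrite rmorph1 mul1r.
exists (fun f g => w (Y *m f) (Y *m g)); split; first exact: sesq_comp.
split; first by move=> f; apply: w_ge0.
by move=> f g; rewrite rmorph1 mul1r tY; apply: sesq_CauchySchwarz_sqrt.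
Qed.

Lemma ker_sum_strongly_singular t w : sesquilinear t ->
  (forall h, exists f g, in_ker w f /\ in_ker t g /\ h = f + g) ->
  left_strongly_singular t w.
Proof.
move=> t_sesq ker_sum.
exists (fun f g => std_inner (sform_mx t *m f) (sform_mx t *m g)); split.
  split; first exact: (sesq_comp std_inner_sesq).
  split; first by move=> f; apply: std_inner_ge0.
  exists std_inner; split; first exact: std_inner_sesq.
  split; first exact: std_inner_ge0.
  move=> f g; rewrite sform_std_inner //.
  exact: sesq_CauchySchwarz_sqrt std_inner_sesq std_inner_ge0 _ _.
move=> h; have [f [g [wf [tg ->]]]] := ker_sum h.
exists (fun _ => f); split; first by rewrite (wf f); exact: cvg0_zero.
rewrite /= (addrC f g) addrK (in_kerE t_sesq g).1 // sesq0l //; last exact: std_inner_sesq.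
exact: cvg0_zero.
Qed.

Lemma singular_annihilator s w (r : 'rV[C]_n) :
  sesquilinear s -> nonneg_form s -> sesquilinear w -> nonneg_form w -> singular s w ->
  (forall f, in_ker w f -> r *m f = 0) -> (forall f, in_ker s f -> r *m f = 0) ->
  forall h, r *m h = 0.
Proof.
move=> s_sesq s_ge0 w_sesq w_ge0 sing_sw kerw_r kers_r h.
have [Yw rw] := sesq_represent w_sesq kerw_r.
have [Ys rs] := sesq_represent s_sesq kers_r.
have [fs [w_fs0 s_fs0]] := sing_sw h.
apply/matrixP => i j; rewrite !ord1 [RHS]mxE.
(* [r h] splits as [r (fs k) + r (h - fs k)], and both terms tend to 0 *)
apply: (@cvg0_const_eq0 (fun k => w (fs k) (col 0 Yw) + s (h - fs k) (col 0 Ys))).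
  move=> k; rewrite -rw -rs.
  have -> : r *m h = r *m fs k + r *m (h - fs k) by rewrite -mulmxDr addrC subrK.
  by rewrite [RHS]mxE.
by apply: cvg0D; apply: cvg0_sesq_l.
Qed.

Lemma in_ker_kermx s f : sesquilinear s ->
  in_ker s f <-> (f^T <= kermx (sform_mx s)^T)%MS.
Proof. by move=> s_sesq; rewrite in_kerE // sub_kermx -trmx_mul trmx_eq0; split => /eqP. Qed.

Lemma ker_sum_of_annihilators s w : sesquilinear s -> sesquilinear w ->
  (forall r : 'rV[C]_n, (forall f, in_ker w f -> r *m f = 0) ->
     (forall f, in_ker s f -> r *m f = 0) -> forall h, r *m h = 0) ->
  forall h, exists f g, in_ker w f /\ in_ker s g /\ h = f + g.
Proof.
move=> s_sesq w_sesq annih h.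
set K := (kermx (sform_mx w)^T + kermx (sform_mx s)^T)%MS.
have hK : (h^T <= K)%MS.
  rewrite submxE -trmx_eq0 trmx_mul trmxK; apply/eqP/row_matrixP => j.
  have annK f : (f^T <= K)%MS -> (col j (cokermx K))^T *m f = 0.
    rewrite submxE => /eqP fK.
    by rewrite -[f in _ *m f]trmxK -trmx_mul colE mulmxA fK mul0mx trmx0.
  rewrite row_mul row0 -tr_col; apply: annih => f kf; apply: annK.
    exact: submx_trans ((in_ker_kermx f w_sesq).1 kf) (addsmxSl _ _).
  exact: submx_trans ((in_ker_kermx f s_sesq).1 kf) (addsmxSr _ _).
have [[u v] /= hE] := sub_addsmxP hK.
exists (u *m kermx (sform_mx w)^T)^T, (v *m kermx (sform_mx s)^T)^T.
split; last split; last by rewrite -[h]trmxK hE linearD.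
  by apply/in_ker_kermx; rewrite // trmxK submxMl.
by apply/in_ker_kermx; rewrite // trmxK submxMl.
Qed.

Lemma strongly_singular_ker_sum t w : sesquilinear w -> nonneg_form w ->
  left_strongly_singular t w ->
  forall h, exists f g, in_ker w f /\ in_ker t g /\ h = f + g.
Proof.
move=> w_sesq w_ge0 [s1 [Ml sing]] h.
have [s1_sesq [s1_ge0 _]] := Ml.
have [f [g [wf [s1g ->]]]] := ker_sum_of_annihilators s1_sesq w_sesq
  (fun r => singular_annihilator (r := r) s1_sesq s1_ge0 w_sesq w_ge0 sing) h.
by exists f, g; split=> //; split=> //; apply: in_Ml_ker Ml (s1g g).
Qed.

End SesquilinearForms.

Theorem mainTheorem3 (R : realType) (n : nat) (t w : sform R n) :
  sesquilinear t -> sesquilinear w -> nonneg_form w ->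
  (((left_bounded t w <-> left_regular t w) /\
    (left_regular t w <-> (forall f : svec R n, in_ker w f -> in_ker t f))) /\
   (left_strongly_singular t w <->
    (forall h : svec R n, exists f g : svec R n, in_ker w f /\ in_ker t g /\ h = f + g))).
Proof.
move=> t_sesq w_sesq w_ge0.
have ker_bounded := ker_left_bounded t_sesq w_sesq w_ge0.
have regular_ker := left_regular_ker (t := t) w_sesq.
split; [split; split | split].
- exact: left_bounded_regular.
- by move/regular_ker/ker_bounded.
- exact: regular_ker.
- by move/ker_bounded/left_bounded_regular.
- exact: strongly_singular_ker_sum.
- exact: ker_sum_strongly_singular.
Qed.
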